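(* Let $\alpha>0$, $d>0$ and $\beta\ge 1$. For every $(\theta_0,W_0)\in\Omega_\beta$ the system $$\dot\theta=F_1(\theta,W),\qquad \dot W=F_2(\theta,W),\qquad (\theta(0),W(0))=(\theta_0,W_0)$$ has a unique solution $(\theta,W)\in C^1(\mathbb{R})\times C^1(\mathbb{R})$ defined for all $t\in\mathbb{R}$ and taking values in $\Omega_\beta$.
   Context: Fix parameters $\alpha>0$, $d>0$, $\beta\ge1$. Let $\theta_\beta=\arctan(\beta^{-1/2})\in(0,\pi/2)$, the unique $\theta\in(0,\pi/2)$ with $\beta^{1/2}\sin\theta-\cos\theta=0$. Let $\Omega_\beta=\{(\theta,W)\in\mathbb{R}^2:\ 0<\theta<\pi/2,\ W\in\mathbb{R},\ (\theta,W)\neq(\theta_\beta,0)\}$. Put $D_\beta(\theta,W)=\frac{d^2}{\beta}(\beta^{1/2}\sin\theta-\cos\theta)^2+W^2$ (positive on $\Omega_\beta$) and $$F_1(\theta,W)=\frac{\alpha\beta^{1/2}W}{D_\beta(\theta,W)^{3/2}},\qquad F_2(\theta,W)=\frac{\beta^{3/2}\sin\theta-\cos\theta}{d\sin\theta\cos\theta}-\frac{\alpha d^2(\sin\theta+\beta^{1/2}\cos\theta)(\beta^{1/2}\sin\theta-\cos\theta)}{\beta^{1/2}D_\beta(\theta,W)^{3/2}}.$$ (This system describes two coaxial circular vortex filaments of radii $R_1=d\beta^{-1/2}\cos\theta$, $R_2=d\sin\theta$ and axial separation $W$.) *)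

From Stdlib Require Import Reals.
Open Scope R_scope.

Definition theta_beta (beta : R) : R := atan (/ sqrt beta).

Definition in_Omega (beta th W : R) : Prop :=
  0 < th /\ th < PI / 2 /\ ~ (th = theta_beta beta /\ W = 0).

Definition D_beta (d beta th W : R) : R :=
  (d ^ 2 / beta) * (sqrt beta * sin th - cos th) ^ 2 + W ^ 2.

Definition D32 (d beta th W : R) : R := D_beta d beta th W * sqrt (D_beta d beta th W).

Definition F1 (alpha d beta th W : R) : R :=
  alpha * sqrt beta * W / D32 d beta th W.

Definition F2 (alpha d beta th W : R) : R :=
  (beta * sqrt beta * sin th - cos th) / (d * sin th * cos th)
  - alpha * d ^ 2 * (sin th + sqrt beta * cos th) * (sqrt beta * sin th - cos th)
      / (sqrt beta * D32 d beta th W).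

Definition C1 (f : R -> R) : Prop :=
  exists f' : R -> R, (forall t, derivable_pt_lim f t (f' t)) /\ continuity f'.

Definition is_global_solution (alpha d beta th0 W0 : R) (th W : R -> R) : Prop :=
  C1 th /\ C1 W /\
  (forall t, in_Omega beta (th t) (W t)) /\
  th 0 = th0 /\ W 0 = W0 /\
  (forall t, derivable_pt_lim th t (F1 alpha d beta (th t) (W t))) /\
  (forall t, derivable_pt_lim W t (F2 alpha d beta (th t) (W t))).

(* The energy [hamiltonian = potential + interaction], with
   [potential th = (beta sqrt beta ln ((1 + sin th) / cos th) + ln ((1 + cos th) / sin th)) / d] and
   [interaction = alpha sqrt beta / sqrt D_beta], is a first integral of the flow.  All its terms are
   nonnegative and blow up at the boundary of [Omega_beta] ([sin th = 0], [cos th = 0] or [D_beta = 0]),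
   so the level set through the initial data stays at a positive distance from it: [sin th >= sig],
   [cos th >= kap], [D_beta >= eta].  Freezing [sin], [cos] and [D_beta] below half these margins gives a
   globally bounded field, Lipschitz on strips, which agrees with [(F1, F2)] near the level set.  Picard
   iteration yields a global solution of the cut-off system and a Gronwall estimate its uniqueness; energy
   conservation and a continuity argument keep every solution of either system inside the region where
   the two fields agree. *)

From Stdlib Require Import Reals Lra Psatz Classical Arith.
From Coquelicot Require Import Coquelicot.
Open Scope R_scope.

Definition lipschitz (x : R -> R) (M : R) : Prop :=
  forall s t, Rabs (x s - x t) <= M * Rabs (s - t).

Lemma lipschitz_of_derive_bound (f f' : R -> R) M :
  (forall t, derivable_pt_lim f t (f' t)) -> (forall t, Rabs (f' t) <= M) -> lipschitz f M.
Proof.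
  intros Hd Hb s t. destruct (MVT_abs f f' t s) as [c [Hc _]]; [intros; apply Hd|].
  rewrite Hc. apply Rmult_le_compat_r; [apply Rabs_pos|auto].
Qed.

Lemma lipschitz_sin : lipschitz sin 1.
Proof.
  apply (lipschitz_of_derive_bound sin cos); [intro; apply derivable_pt_lim_sin|].
  intro. apply Rabs_le. pose proof (COS_bound t). lra.
Qed.

Lemma lipschitz_cos : lipschitz cos 1.
Proof.
  apply (lipschitz_of_derive_bound cos (fun x => - sin x)); [intro; apply derivable_pt_lim_cos|].
  intro. rewrite Rabs_Ropp. apply Rabs_le. pose proof (SIN_bound t). lra.
Qed.

Lemma Rabs_le_of_lipschitz (x : R -> R) M s T :
  0 <= M -> lipschitz x M -> Rabs s <= T -> Rabs (x s) <= Rabs (x 0) + M * T.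
Proof.
  intros HM H HsT. pose proof (H s 0) as Hs. rewrite Rminus_0_r in Hs.
  pose proof (Rabs_triang_inv (x s) (x 0)). pose proof (Rmult_le_compat_l M _ _ HM HsT). lra.
Qed.

(* Only strips: the cut-off field contains [W ^ 2] through [D_beta], which is not globally Lipschitz. *)
Definition strip_lipschitz (f : R -> R -> R) : Prop :=
  forall r, 0 <= r -> exists L B, 0 <= L /\ forall a b a' b',
    Rabs b <= r -> Rabs b' <= r ->
    Rabs (f a b) <= B /\ Rabs (f a b - f a' b') <= L * (Rabs (a - a') + Rabs (b - b')).

Definition lipschitz_on_strip (f : R -> R -> R) (r L : R) : Prop :=
  forall a b a' b', Rabs b <= r -> Rabs b' <= r ->
    Rabs (f a b - f a' b') <= L * (Rabs (a - a') + Rabs (b - b')).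

Lemma strip_lipschitz_on f r : strip_lipschitz f -> 0 <= r -> exists L, 0 <= L /\ lipschitz_on_strip f r L.
Proof.
  intros Hf Hr. destruct (Hf r Hr) as [L [B [HL H]]]. exists L. split; auto.
  intros a b a' b' Hb Hb'. apply (H a b a' b' Hb Hb').
Qed.

Lemma strip_lipschitz_ext f g : (forall a b, f a b = g a b) -> strip_lipschitz f -> strip_lipschitz g.
Proof.
  intros E H r Hr. destruct (H r Hr) as [L [B [HL HH]]]. exists L, B. split; auto.
  intros. rewrite <- !E. auto.
Qed.

Lemma strip_lipschitz_const c : strip_lipschitz (fun _ _ => c).
Proof.
  intros r _. exists 0, (Rabs c). split; [lra|]. intros. split; [lra|].
  replace (c - c) with 0 by ring. rewrite Rabs_R0.
  pose proof (Rabs_pos (a - a')). pose proof (Rabs_pos (b - b')). nra.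
Qed.

Lemma strip_lipschitz_snd : strip_lipschitz (fun _ b => b).
Proof.
  intros r Hr. exists 1, r. split; [lra|]. intros. split; [lra|].
  pose proof (Rabs_pos (a - a')). lra.
Qed.

Lemma strip_lipschitz_fst (g : R -> R) : lipschitz g 1 -> (forall a, Rabs (g a) <= 1) ->
  strip_lipschitz (fun a _ => g a).
Proof.
  intros Hg Hb r _. exists 1, 1. split; [lra|]. intros. split; auto.
  pose proof (Hg a a'). pose proof (Rabs_pos (b - b')). lra.
Qed.

Lemma Rabs_sin_le a : Rabs (sin a) <= 1.
Proof. apply Rabs_le. pose proof (SIN_bound a). lra. Qed.

Lemma Rabs_cos_le a : Rabs (cos a) <= 1.
Proof. apply Rabs_le. pose proof (COS_bound a). lra. Qed.

Lemma strip_lipschitz_sin : strip_lipschitz (fun a _ => sin a).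
Proof. apply strip_lipschitz_fst; [apply lipschitz_sin|apply Rabs_sin_le]. Qed.

Lemma strip_lipschitz_cos : strip_lipschitz (fun a _ => cos a).
Proof. apply strip_lipschitz_fst; [apply lipschitz_cos|apply Rabs_cos_le]. Qed.

Lemma strip_lipschitz_plus f g :
  strip_lipschitz f -> strip_lipschitz g -> strip_lipschitz (fun a b => f a b + g a b).
Proof.
  intros Hf Hg r Hr. destruct (Hf r Hr) as [L1 [B1 [HL1 H1]]].
  destruct (Hg r Hr) as [L2 [B2 [HL2 H2]]]. exists (L1 + L2), (B1 + B2). split; [lra|].
  intros a b a' b' Hb Hb'. destruct (H1 a b a' b' Hb Hb') as [A1 A2].
  destruct (H2 a b a' b' Hb Hb') as [C1 C2]. split.
  - eapply Rle_trans; [apply Rabs_triang|lra].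
  - replace (f a b + g a b - (f a' b' + g a' b')) with ((f a b - f a' b') + (g a b - g a' b')) by ring.
    eapply Rle_trans; [apply Rabs_triang|lra].
Qed.

Lemma strip_lipschitz_opp f : strip_lipschitz f -> strip_lipschitz (fun a b => - f a b).
Proof.
  intros Hf r Hr. destruct (Hf r Hr) as [L [B [HL H]]]. exists L, B. split; [lra|].
  intros a b a' b' Hb Hb'. destruct (H a b a' b' Hb Hb') as [A1 A2]. split.
  - rewrite Rabs_Ropp; lra.
  - replace (- f a b - - f a' b') with (- (f a b - f a' b')) by ring. rewrite Rabs_Ropp; lra.
Qed.

Lemma strip_lipschitz_minus f g :
  strip_lipschitz f -> strip_lipschitz g -> strip_lipschitz (fun a b => f a b - g a b).
Proof.
  intros. apply (strip_lipschitz_plus f (fun a b => - g a b)); auto. apply strip_lipschitz_opp; auto.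
Qed.

Lemma strip_lipschitz_mult f g :
  strip_lipschitz f -> strip_lipschitz g -> strip_lipschitz (fun a b => f a b * g a b).
Proof.
  intros Hf Hg r Hr. destruct (Hf r Hr) as [L1 [B1 [HL1 H1]]].
  destruct (Hg r Hr) as [L2 [B2 [HL2 H2]]].
  pose proof (Rabs_pos B1). pose proof (Rabs_pos B2).
  exists (Rabs B1 * L2 + Rabs B2 * L1), (B1 * B2). split; [nra|].
  intros a b a' b' Hb Hb'. destruct (H1 a b a' b' Hb Hb') as [A1 A2].
  destruct (H2 a b a' b' Hb Hb') as [C1 C2]. destruct (H2 a' b' a' b' Hb' Hb') as [C1' _].
  pose proof (Rabs_pos (f a b)). pose proof (Rabs_pos (g a b)). pose proof (Rabs_pos (g a' b')).
  split.
  - rewrite Rabs_mult. apply Rmult_le_compat; auto.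
  - replace (f a b * g a b - f a' b' * g a' b')
      with (f a b * (g a b - g a' b') + g a' b' * (f a b - f a' b')) by ring.
    eapply Rle_trans; [apply Rabs_triang|]. rewrite !Rabs_mult.
    pose proof (RRle_abs B1). pose proof (RRle_abs B2).
    pose proof (Rabs_pos (g a b - g a' b')). pose proof (Rabs_pos (f a b - f a' b')).
    set (dd := Rabs (a - a') + Rabs (b - b')) in *.
    assert (Rabs (f a b) * Rabs (g a b - g a' b') <= Rabs B1 * (L2 * dd))
      by (apply Rmult_le_compat; auto; lra).
    assert (Rabs (g a' b') * Rabs (f a b - f a' b') <= Rabs B2 * (L1 * dd))
      by (apply Rmult_le_compat; auto; lra).
    nra.
Qed.

Lemma strip_lipschitz_inv f c :
  0 < c -> (forall a b, c <= f a b) -> strip_lipschitz f -> strip_lipschitz (fun a b => / f a b).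
Proof.
  intros Hc Hfc Hf r Hr. destruct (Hf r Hr) as [L [B [HL H]]].
  exists (L / (c * c)), (/ c). split.
  { apply Rmult_le_pos; auto. apply Rlt_le, Rinv_0_lt_compat; nra. }
  intros a b a' b' Hb Hb'. destruct (H a b a' b' Hb Hb') as [_ A].
  pose proof (Hfc a b). pose proof (Hfc a' b'). split.
  - rewrite Rabs_inv, Rabs_right by lra. apply Rinv_le_contravar; lra.
  - replace (/ f a b - / f a' b') with ((f a' b' - f a b) / (f a b * f a' b')) by (field; lra).
    unfold Rdiv. rewrite Rabs_mult, Rabs_inv, Rabs_minus_sym, (Rabs_right (f a b * f a' b')) by nra.
    pose proof (Rabs_pos (f a b - f a' b')).
    assert (/ (f a b * f a' b') <= / (c * c)) by (apply Rinv_le_contravar; nra).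
    assert (0 < / (f a b * f a' b')) by (apply Rinv_0_lt_compat; nra).
    replace (L * / (c * c) * (Rabs (a - a') + Rabs (b - b')))
      with ((L * (Rabs (a - a') + Rabs (b - b'))) * / (c * c)) by ring.
    apply Rmult_le_compat; lra.
Qed.

Lemma strip_lipschitz_sqrt f c :
  0 < c -> (forall a b, c <= f a b) -> strip_lipschitz f -> strip_lipschitz (fun a b => sqrt (f a b)).
Proof.
  intros Hc Hfc Hf r Hr. destruct (Hf r Hr) as [L [B [HL H]]].
  pose proof (sqrt_lt_R0 c Hc) as Hsc.
  exists (L / (2 * sqrt c)), (sqrt (Rabs B)). split.
  { apply Rmult_le_pos; auto. apply Rlt_le, Rinv_0_lt_compat; nra. }
  intros a b a' b' Hb Hb'. destruct (H a b a' b' Hb Hb') as [A1 A2].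
  pose proof (Hfc a b). pose proof (Hfc a' b'). split.
  - rewrite Rabs_right by (apply Rle_ge, sqrt_pos). apply sqrt_le_1_alt.
    pose proof (RRle_abs (f a b)). pose proof (RRle_abs B). lra.
  - assert (sqrt c <= sqrt (f a b)) by (apply sqrt_le_1_alt; lra).
    assert (sqrt c <= sqrt (f a' b')) by (apply sqrt_le_1_alt; lra).
    replace (sqrt (f a b) - sqrt (f a' b'))
      with ((f a b - f a' b') / (sqrt (f a b) + sqrt (f a' b'))).
    2:{ rewrite <- (sqrt_sqrt (f a b)) at 1 by lra. rewrite <- (sqrt_sqrt (f a' b')) at 1 by lra.
        field. lra. }
    unfold Rdiv. rewrite Rabs_mult, Rabs_inv, (Rabs_right (_ + _)) by lra.
    pose proof (Rabs_pos (f a b - f a' b')).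
    assert (/ (sqrt (f a b) + sqrt (f a' b')) <= / (2 * sqrt c)) by (apply Rinv_le_contravar; lra).
    assert (0 < / (sqrt (f a b) + sqrt (f a' b'))) by (apply Rinv_0_lt_compat; lra).
    replace (L * / (2 * sqrt c) * (Rabs (a - a') + Rabs (b - b')))
      with ((L * (Rabs (a - a') + Rabs (b - b'))) * / (2 * sqrt c)) by ring.
    apply Rmult_le_compat; lra.
Qed.

Lemma strip_lipschitz_max f c : strip_lipschitz f -> strip_lipschitz (fun a b => Rmax (f a b) c).
Proof.
  intros Hf r Hr. destruct (Hf r Hr) as [L [B [HL H]]].
  exists L, (Rabs B + Rabs c). split; auto.
  intros a b a' b' Hb Hb'. destruct (H a b a' b' Hb Hb') as [A1 A2].
  pose proof (RRle_abs B). pose proof (Rabs_pos B). pose proof (Rabs_pos c). split.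
  - unfold Rmax. destruct (Rle_dec (f a b) c); lra.
  - eapply Rle_trans; [|apply A2]. unfold Rmax.
    destruct (Rle_dec (f a b) c), (Rle_dec (f a' b') c); apply Rabs_le;
      pose proof (Rle_abs (f a b - f a' b')); pose proof (Rle_abs (- (f a b - f a' b')));
      rewrite Rabs_Ropp in *; lra.
Qed.

Lemma continuity_pt_of_local_lipschitz (f : R -> R) u K : 0 <= K ->
  (forall s, Rabs (s - u) < 1 -> Rabs (f s - f u) <= K * Rabs (s - u)) -> continuity_pt f u.
Proof.
  intros HK H eps Heps. exists (Rmin 1 (eps / (K + 1))). split.
  { apply Rmin_pos; [lra|]. apply Rdiv_lt_0_compat; lra. }
  intros s [_ Hs]. simpl in *. unfold R_dist in *.
  assert (Hs1 : Rabs (s - u) < 1) by (eapply Rlt_le_trans; [apply Hs|apply Rmin_l]).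
  assert (Hs2 : Rabs (s - u) < eps / (K + 1)) by (eapply Rlt_le_trans; [apply Hs|apply Rmin_r]).
  apply (Rmult_lt_compat_l (K + 1)) in Hs2; [|lra].
  replace ((K + 1) * (eps / (K + 1))) with eps in Hs2 by (field; lra).
  pose proof (H s Hs1). pose proof (Rabs_pos (s - u)). nra.
Qed.

Lemma continuous_strip_lipschitz_comp G x y M : 0 <= M -> strip_lipschitz G ->
  lipschitz x M -> lipschitz y M -> forall u, continuous (fun s => G (x s) (y s)) u.
Proof.
  intros HM HG Hx Hy u. apply continuity_pt_filterlim.
  destruct (HG (Rabs (y u) + M)) as [L [B [HL HLB]]]; [pose proof (Rabs_pos (y u)); lra|].
  apply continuity_pt_of_local_lipschitz with (K := L * (M + M)); [nra|].
  intros s Hs.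
  assert (Hys : Rabs (y s) <= Rabs (y u) + M).
  { pose proof (Hy s u). pose proof (Rabs_triang_inv (y s) (y u)). pose proof (Rabs_pos (s - u)). nra. }
  destruct (HLB (x s) (y s) (x u) (y u) Hys ltac:(lra)) as [_ H2].
  eapply Rle_trans; [apply H2|].
  pose proof (Hx s u). pose proof (Hy s u).
  replace (L * (M + M) * Rabs (s - u)) with (L * (M * Rabs (s - u) + M * Rabs (s - u))) by ring.
  apply Rmult_le_compat_l; lra.
Qed.

Lemma ex_RInt_cont (g : R -> R) : (forall u, continuous g u) -> forall a b, ex_RInt g a b.
Proof. intros Hc a b. apply (@ex_RInt_continuous R_CompleteNormedModule). intros; apply Hc. Qed.

Lemma continuous_Rminus (f g : R -> R) u :
  continuous f u -> continuous g u -> continuous (fun x => f x - g x) u.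
Proof. intros. apply (continuous_minus f g u); auto. Qed.

Lemma RInt_minus_cont (f g : R -> R) a b : (forall u, continuous f u) -> (forall u, continuous g u) ->
  RInt f a b - RInt g a b = RInt (fun u => f u - g u) a b.
Proof.
  intros Hf Hg. symmetry. exact (RInt_minus f g a b (ex_RInt_cont f Hf a b) (ex_RInt_cont g Hg a b)).
Qed.

Lemma RInt_0_Chasles (g : R -> R) s t : (forall u, continuous g u) ->
  RInt g 0 t - RInt g 0 s = RInt g s t.
Proof.
  intros Hc. rewrite <- (RInt_Chasles g 0 s t) by apply ex_RInt_cont, Hc.
  change (plus ?a ?b) with (a + b). ring.
Qed.

Lemma Rabs_RInt_le_const (g : R -> R) M a b : (forall u, continuous g u) ->
  (forall u, Rmin a b <= u <= Rmax a b -> Rabs (g u) <= M) ->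
  Rabs (RInt g a b) <= M * Rabs (b - a).
Proof.
  intros Hc Hb. pose proof (ex_RInt_cont g Hc) as Hex.
  destruct (Rle_or_lt a b).
  - rewrite (Rabs_right (b - a)), Rmult_comm by lra. apply abs_RInt_le_const; auto.
    intros. apply Hb. rewrite Rmin_left, Rmax_right; lra.
  - rewrite <- opp_RInt_swap by auto. change (Rabs (- RInt g b a) <= M * Rabs (b - a)).
    rewrite Rabs_Ropp, (Rabs_left (b - a)) by lra. replace (- (b - a)) with (a - b) by ring.
    rewrite Rmult_comm. apply abs_RInt_le_const; auto; try lra.
    intros. apply Hb. rewrite Rmin_right, Rmax_left; lra.
Qed.

Lemma RInt_monomial (C : R) (k : nat) (s : R) : 0 <= s ->
  RInt (fun u => C * u ^ k) 0 s = C * s ^ (S k) / INR (S k).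
Proof.
  intros Hs. apply is_RInt_unique.
  replace (C * s ^ S k / INR (S k)) with (C * s ^ S k / INR (S k) - C * 0 ^ S k / INR (S k))
    by (rewrite pow_i by lia; unfold Rdiv; ring).
  apply (is_RInt_derive (fun u => C * u ^ S k / INR (S k))).
  - intros x _. auto_derive; auto.
    change (match k with 0%nat => 1 | S _ => INR k + 1 end) with (INR (S k)).
    field. apply not_0_INR. lia.
  - intros x _. apply (ex_derive_continuous (fun u => C * u ^ k)). auto_derive. auto.
Qed.

Lemma RInt_monomial_neg (C : R) (k : nat) (s : R) : s <= 0 ->
  RInt (fun u => C * (- u) ^ k) s 0 = C * (- s) ^ (S k) / INR (S k).
Proof.
  intros Hs. apply is_RInt_unique.
  replace (C * (- s) ^ S k / INR (S k))
    with (- C * (- 0) ^ S k / INR (S k) - - C * (- s) ^ S k / INR (S k))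
    by (rewrite Ropp_0, pow_i by lia; unfold Rdiv; ring).
  apply (is_RInt_derive (fun u => - C * (- u) ^ S k / INR (S k))).
  - intros x _. auto_derive; auto.
    change (match k with 0%nat => 1 | S _ => INR k + 1 end) with (INR (S k)).
    field. apply not_0_INR. lia.
  - intros x _. apply (ex_derive_continuous (fun u => C * (- u) ^ k)). auto_derive. auto.
Qed.

Lemma Rabs_RInt_le_monomial (phi : R -> R) (C : R) (k : nat) (s : R) :
  (forall u, continuous phi u) ->
  (forall u, Rabs u <= Rabs s -> Rabs (phi u) <= C * Rabs u ^ k) ->
  Rabs (RInt phi 0 s) <= C * Rabs s ^ (S k) / INR (S k).
Proof.
  intros Hc Hb. pose proof (ex_RInt_cont phi Hc) as Hex.
  assert (Hexa : forall a b, ex_RInt (fun t => Rabs (phi t)) a b).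
  { apply ex_RInt_cont. intro u. apply (continuous_comp phi Rabs); [auto|apply continuous_Rabs]. }
  destruct (Rle_or_lt 0 s).
  - eapply Rle_trans; [apply abs_RInt_le; auto|].
    rewrite (Rabs_right s), <- RInt_monomial by lra.
    apply RInt_le; auto.
    + apply ex_RInt_cont. intro u. apply (ex_derive_continuous (fun u => C * u ^ k)). auto_derive. auto.
    + intros x Hx. rewrite <- (Rabs_right x) at 2 by lra. apply Hb. rewrite !Rabs_right; lra.
  - rewrite <- opp_RInt_swap by auto. change (Rabs (- RInt phi s 0) <= C * Rabs s ^ (S k) / INR (S k)).
    rewrite Rabs_Ropp. eapply Rle_trans; [apply abs_RInt_le; auto; lra|].
    rewrite (Rabs_left s), <- RInt_monomial_neg by lra.
    apply RInt_le; auto; [lra| |].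
    + apply ex_RInt_cont. intro u. apply (ex_derive_continuous (fun u => C * (- u) ^ k)). auto_derive. auto.
    + intros x Hx. rewrite <- (Rabs_left x) by lra. apply Hb. rewrite !Rabs_left; lra.
Qed.

Lemma derivable_pt_lim_RInt_0 (g : R -> R) c t : (forall u, continuous g u) ->
  derivable_pt_lim (fun t => c + RInt g 0 t) t (g t).
Proof.
  intros Hg. apply is_derive_Reals.
  assert (D : is_derive (fun t => RInt g 0 t) t (g t)).
  { apply (is_derive_RInt g (fun t => RInt g 0 t) 0 t); auto.
    apply filter_forall. intros. apply (@RInt_correct R_CompleteNormedModule). apply ex_RInt_cont; auto. }
  pose proof (is_derive_plus _ _ _ _ _ (is_derive_const c t) D) as E.
  rewrite plus_zero_l in E. exact E.
Qed.

Fixpoint psum (a : nat -> R) (n : nat) : R := match n with O => 0 | S m => psum a m + a m end.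

Definition tail (a : nat -> R) (n : nat) : R := Series a - psum a n.

Lemma is_lim_psum a : ex_series a -> is_lim_seq (psum a) (Series a).
Proof.
  intro H. apply is_lim_seq_incr_1. apply is_lim_seq_ext with (u := sum_n a); [|apply Series_correct, H].
  intro n. induction n as [|n IH]; simpl.
  - rewrite sum_O. apply eq_sym, Rplus_0_l.
  - rewrite sum_Sn, IH. reflexivity.
Qed.

Lemma is_lim_tail a : ex_series a -> is_lim_seq (tail a) 0.
Proof.
  intro H. unfold tail. replace (Finite 0) with (Finite (Series a - Series a)) by (f_equal; ring).
  apply is_lim_seq_minus'; [apply is_lim_seq_const|apply is_lim_psum, H].
Qed.

Lemma psum_le_Series a n : (forall k, 0 <= a k) -> ex_series a -> psum a n <= Series a.
Proof.
  intros Ha Hs.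
  apply (is_lim_seq_le (fun _ => psum a n) (fun j => psum a (j + n)) (psum a n) (Series a));
    [|apply is_lim_seq_const|apply (is_lim_seq_incr_n (psum a) n), is_lim_psum, Hs].
  intro j. induction j as [|j IH]; simpl; [lra|]. pose proof (Ha (j + n)%nat). lra.
Qed.

Lemma is_lim_seq_Rabs_le (u : nat -> R) (l c : R) :
  is_lim_seq u l -> (forall n, Rabs (u n) <= c) -> Rabs l <= c.
Proof.
  intros Hu Hc. apply (is_lim_seq_le (fun n => Rabs (u n)) (fun _ => c) (Rabs l) c); auto.
  - apply (is_lim_seq_abs u l Hu).
  - apply is_lim_seq_const.
Qed.

Lemma is_lim_seq_eq_of_Rabs_le (u e : nat -> R) (l c : R) : is_lim_seq u l -> is_lim_seq e 0 ->
  (forall n, Rabs (u n - c) <= e n) -> l = c.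
Proof.
  intros Hu He Hb.
  assert (Rabs (l - c) <= 0).
  { apply (is_lim_seq_le (fun n => Rabs (u n - c)) e (Rabs (l - c)) 0); auto.
    apply (is_lim_seq_abs (fun n => u n - c) (l - c)).
    apply is_lim_seq_minus'; auto. apply is_lim_seq_const. }
  pose proof (Rabs_pos (l - c)). assert (Rabs (l - c) = 0) by lra. apply Rabs_eq_0 in H1. lra.
Qed.

(* The tail bound is what makes the convergence uniform when [a] does not depend on the point. *)
Lemma cvg_of_summable_increments (u a : nat -> R) : ex_series a ->
  (forall k, Rabs (u (S k) - u k) <= a k) ->
  exists l : R, is_lim_seq u l /\ forall n, Rabs (l - u n) <= tail a n.
Proof.
  intros Hs Hb.
  assert (Ha : forall k, 0 <= a k) by (intro k; eapply Rle_trans; [apply Rabs_pos|apply Hb]).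
  assert (Ht : forall n j, Rabs (u (j + n)%nat - u n) <= tail a n).
  { intros n j. apply Rle_trans with (psum a (j + n) - psum a n).
    - induction j as [|j IH]; simpl.
      + replace (u n - u n) with 0 by ring. rewrite Rabs_R0. lra.
      + replace (u (S (j + n)) - u n) with ((u (S (j + n)) - u (j + n)%nat) + (u (j + n)%nat - u n)) by ring.
        eapply Rle_trans; [apply Rabs_triang|]. pose proof (Hb (j + n)%nat). lra.
    - unfold tail. pose proof (psum_le_Series a (j + n) Ha Hs). lra. }
  assert (Hc : ex_lim_seq_cauchy u).
  { intro eps. destruct (proj2 (is_lim_seq_spec (tail a) 0) (is_lim_tail a Hs) eps) as [N HN].
    exists N. intros n m Hn Hm.
    assert (Hd : forall p q, (N <= p)%nat -> (p <= q)%nat -> Rabs (u q - u p) < eps).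
    { intros p q Hp Hpq. replace q with ((q - p) + p)%nat by lia.
      eapply Rle_lt_trans; [apply Ht|]. specialize (HN p Hp). rewrite Rminus_0_r in HN.
      eapply Rle_lt_trans; [apply RRle_abs|exact HN]. }
    destruct (Nat.le_gt_cases n m); [rewrite Rabs_minus_sym; apply Hd; auto|apply Hd; auto; lia]. }
  apply ex_lim_seq_cauchy_corr in Hc. destruct Hc as [l Hl]. exists l. split; auto.
  intro n. apply (is_lim_seq_Rabs_le (fun j => u (j + n)%nat - u n)); [|intro j; apply Ht].
  apply is_lim_seq_minus'; [apply (is_lim_seq_incr_n u n); auto|apply is_lim_seq_const].
Qed.

Lemma Rabs_le_of_between u t : Rmin 0 t <= u <= Rmax 0 t -> Rabs u <= Rabs t.
Proof.
  intros Hu. destruct (Rle_or_lt 0 t).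
  - rewrite Rmin_left, Rmax_right in Hu by lra. rewrite !Rabs_right; lra.
  - rewrite Rmin_right, Rmax_left in Hu by lra. apply Rabs_le. rewrite (Rabs_left t); lra.
Qed.

Lemma Rabs_RInt_comp_minus_le G r L (x y x' y' : R -> R) e t : 0 <= L ->
  lipschitz_on_strip G r L ->
  (forall u, continuous (fun s => G (x s) (y s)) u) ->
  (forall u, continuous (fun s => G (x' s) (y' s)) u) ->
  (forall u, Rabs u <= Rabs t ->
     Rabs (y u) <= r /\ Rabs (y' u) <= r /\ Rabs (x u - x' u) <= e /\ Rabs (y u - y' u) <= e) ->
  Rabs (RInt (fun s => G (x s) (y s)) 0 t - RInt (fun s => G (x' s) (y' s)) 0 t) <= L * (2 * e) * Rabs t.
Proof.
  intros HL HG Hc Hc' Hb. rewrite RInt_minus_cont by auto.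
  rewrite <- (Rminus_0_r t) at 2. apply Rabs_RInt_le_const.
  - intro u. apply continuous_Rminus; auto.
  - intros u Hu. destruct (Hb u (Rabs_le_of_between u t Hu)) as [H1 [H2 [H3 H4]]].
    eapply Rle_trans; [apply HG; auto|]. apply Rmult_le_compat_l; lra.
Qed.

Lemma lipschitz_integral G M c (x y : R -> R) : 0 <= M -> strip_lipschitz G ->
  (forall a b, Rabs (G a b) <= M) -> lipschitz x M -> lipschitz y M ->
  lipschitz (fun t => c + RInt (fun s => G (x s) (y s)) 0 t) M.
Proof.
  intros HM HG HB Hx Hy s t.
  pose proof (continuous_strip_lipschitz_comp G x y M HM HG Hx Hy) as Hc.
  replace (c + RInt (fun u => G (x u) (y u)) 0 s - (c + RInt (fun u => G (x u) (y u)) 0 t))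
    with (RInt (fun u => G (x u) (y u)) 0 s - RInt (fun u => G (x u) (y u)) 0 t) by ring.
  rewrite RInt_0_Chasles by auto. apply Rabs_RInt_le_const; auto.
Qed.

Lemma ex_series_exp_bound C K : ex_series (fun n => C * (/ INR (fact n) * K ^ n)).
Proof.
  apply (ex_series_scal (K := R_AbsRing) C (fun n => / INR (fact n) * K ^ n)).
  exists (exp K). apply is_pseries_R, is_exp_Reals.
Qed.

Lemma factorial_term_le M L T s n : 0 <= M -> 0 <= L -> Rabs s <= T ->
  2 * M * L ^ n * Rabs s ^ (S n) / INR (fact (S n)) <= 2 * M * T * (/ INR (fact n) * (L * T) ^ n).
Proof.
  intros HM HL Hs. pose proof (Rabs_pos s) as Hs0.
  assert (Hf : 0 < INR (fact n)) by (apply lt_0_INR, lt_O_fact).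
  assert (Hf' : INR (fact n) <= INR (fact (S n))) by (apply le_INR; rewrite fact_simpl; lia).
  assert (Hp : Rabs s ^ n <= T ^ n) by (apply pow_incr; lra).
  pose proof (pow_le (Rabs s) n Hs0). pose proof (pow_le L n HL).
  assert (Hsn : Rabs s * Rabs s ^ n <= T * T ^ n) by (apply Rmult_le_compat; lra).
  assert (HML : 0 <= 2 * M * L ^ n) by nra.
  rewrite Rpow_mult_distr. simpl pow.
  apply Rle_trans with (2 * M * L ^ n * (Rabs s * Rabs s ^ n) / INR (fact n)).
  - unfold Rdiv. apply Rmult_le_compat_l; [apply Rmult_le_pos; [apply HML|apply Rmult_le_pos; auto]|].
    apply Rinv_le_contravar; lra.
  - unfold Rdiv. pose proof (Rinv_0_lt_compat _ Hf).
    pose proof (Rmult_le_compat_l _ _ _ HML Hsn). nra.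
Qed.

Lemma derivable_pt_lim_sq_minus (f g : R -> R) t a b :
  derivable_pt_lim f t a -> derivable_pt_lim g t b ->
  derivable_pt_lim (fun s => (f s - g s) * (f s - g s)) t (2 * (f t - g t) * (a - b)).
Proof.
  intros Hf Hg. pose proof (derivable_pt_lim_minus f g t a b Hf Hg) as H.
  replace (2 * (f t - g t) * (a - b)) with ((a - b) * (f - g)%F t + (f - g)%F t * (a - b))
    by (unfold minus_fct; ring).
  exact (derivable_pt_lim_mult _ _ _ _ _ H H).
Qed.

Lemma gronwall_zero (Q Q' : R -> R) K t : 0 <= K ->
  (forall s, derivable_pt_lim Q s (Q' s)) -> (forall s, 0 <= Q s) -> Q 0 = 0 ->
  (forall s, Rabs s <= Rabs t -> Rabs (Q' s) <= K * Q s) -> Q t = 0.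
Proof.
  intros HK DQ Qpos Q0 Hb. enough (Q t <= 0) by (pose proof (Qpos t); lra).
  assert (Dexp : forall c s, derivable_pt_lim (fun s => exp (c * s)) s (c * exp (c * s))).
  { intros c s. apply is_derive_Reals. auto_derive; auto. ring. }
  (* [exp (-K s) Q s] is nonincreasing and [exp (K s) Q s] nondecreasing. *)
  destruct (Rtotal_order 0 t) as [Hp | [Hz | Hn]].
  - destruct (MVT_cor2 (fun s => exp (- K * s) * Q s)
      (fun s => - K * exp (- K * s) * Q s + exp (- K * s) * Q' s) 0 t Hp) as [c [Hc Hc']].
    { intros c _. apply (derivable_pt_lim_mult (fun s => exp (- K * s)) Q); auto. }
    rewrite Q0 in Hc.
    assert (Hcb : Rabs (Q' c) <= K * Q c) by (apply Hb; rewrite !Rabs_right; lra).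
    pose proof (exp_pos (- K * c)). pose proof (exp_pos (- K * t)). pose proof (Rle_abs (Q' c)).
    assert (- K * exp (- K * c) * Q c + exp (- K * c) * Q' c <= 0) by nra.
    nra.
  - subst t. lra.
  - destruct (MVT_cor2 (fun s => exp (K * s) * Q s)
      (fun s => K * exp (K * s) * Q s + exp (K * s) * Q' s) t 0 Hn) as [c [Hc Hc']].
    { intros c _. apply (derivable_pt_lim_mult (fun s => exp (K * s)) Q); auto. }
    rewrite Q0 in Hc.
    assert (Hcb : Rabs (Q' c) <= K * Q c) by (apply Hb; rewrite !Rabs_left; lra).
    pose proof (exp_pos (K * c)). pose proof (exp_pos (K * t)).
    pose proof (Rle_abs (- Q' c)). rewrite Rabs_Ropp in *.
    assert (0 <= K * exp (K * c) * Q c + exp (K * c) * Q' c) by nra.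
    nra.
Qed.

Lemma Rabs_sq_dist_deriv_le dx dy g1 g2 L1 L2 : 0 <= L1 -> 0 <= L2 ->
  Rabs g1 <= L1 * (Rabs dx + Rabs dy) -> Rabs g2 <= L2 * (Rabs dx + Rabs dy) ->
  Rabs (2 * dx * g1 + 2 * dy * g2) <= 4 * (L1 + L2) * (dx * dx + dy * dy).
Proof.
  intros H1 H2 Hg1 Hg2.
  eapply Rle_trans; [apply Rabs_triang|]. rewrite !Rabs_mult, (Rabs_right 2) by lra.
  pose proof (Rabs_pos dx). pose proof (Rabs_pos dy). pose proof (Rabs_pos g1). pose proof (Rabs_pos g2).
  assert (Ex : dx * dx = Rabs dx * Rabs dx) by (rewrite <- Rabs_mult; symmetry; apply Rabs_right; nra).
  assert (Ey : dy * dy = Rabs dy * Rabs dy) by (rewrite <- Rabs_mult; symmetry; apply Rabs_right; nra).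
  rewrite Ex, Ey.
  set (A := Rabs dx) in *. set (B := Rabs dy) in *. clearbody A B.
  assert (A * Rabs g1 <= A * (L1 * (A + B))) by (apply Rmult_le_compat_l; lra).
  assert (B * Rabs g2 <= B * (L2 * (A + B))) by (apply Rmult_le_compat_l; lra).
  assert (0 <= (A + B) * (L1 * B + L2 * A))
    by (apply Rmult_le_pos; [lra|apply Rplus_le_le_0_compat; apply Rmult_le_pos; lra]).
  assert (Hsq : (A + B) * (A + B) <= 2 * (A * A + B * B))
    by (pose proof (Rle_0_sqr (A - B)); unfold Rsqr in *; lra).
  assert (HL : 0 <= L1 + L2) by lra.
  pose proof (Rmult_le_compat_l _ _ _ HL Hsq). lra.
Qed.

Section Picard.

Variables (G1 G2 : R -> R -> R) (M : R).
Hypotheses (HG1 : strip_lipschitz G1) (HG2 : strip_lipschitz G2)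
  (HB1 : forall a b, Rabs (G1 a b) <= M) (HB2 : forall a b, Rabs (G2 a b) <= M).

Lemma field_bound_nonneg : 0 <= M.
Proof. pose proof (HB1 0 0). pose proof (Rabs_pos (G1 0 0)). lra. Qed.

Lemma continuous_field_comp (x y : R -> R) : lipschitz x M -> lipschitz y M ->
  (forall u, continuous (fun s => G1 (x s) (y s)) u) /\ (forall u, continuous (fun s => G2 (x s) (y s)) u).
Proof. intros Hx Hy. split; apply continuous_strip_lipschitz_comp with M; auto; apply field_bound_nonneg. Qed.

Section Iteration.

Variables a0 b0 : R.

Fixpoint picard (n : nat) : R -> R * R :=
  match n with
  | O => fun _ => (a0, b0)
  | S m => fun t =>
     (a0 + RInt (fun s => G1 (fst (picard m s)) (snd (picard m s))) 0 t,
      b0 + RInt (fun s => G2 (fst (picard m s)) (snd (picard m s))) 0 t)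
  end.

Definition picard_x n t := fst (picard n t).
Definition picard_y n t := snd (picard n t).

Lemma picard_x_S n t :
  picard_x (S n) t = a0 + RInt (fun s => G1 (picard_x n s) (picard_y n s)) 0 t.
Proof. reflexivity. Qed.

Lemma picard_y_S n t :
  picard_y (S n) t = b0 + RInt (fun s => G2 (picard_x n s) (picard_y n s)) 0 t.
Proof. reflexivity. Qed.

Lemma picard_at_0 n : picard_x n 0 = a0 /\ picard_y n 0 = b0.
Proof.
  destruct n; [split; reflexivity|].
  rewrite picard_x_S, picard_y_S, !RInt_point. change (zero : R) with 0. split; ring.
Qed.

Lemma lipschitz_picard n : lipschitz (picard_x n) M /\ lipschitz (picard_y n) M.
Proof.
  pose proof field_bound_nonneg as HM.
  induction n as [|n [IHx IHy]].
  - split; intros s t; unfold picard_x, picard_y; simpl;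
      rewrite Rminus_diag, Rabs_R0; pose proof (Rabs_pos (s - t)); nra.
  - split; intros s t; rewrite ?picard_x_S, ?picard_y_S.
    + apply (lipschitz_integral G1 M a0 _ _ HM HG1 HB1 IHx IHy).
    + apply (lipschitz_integral G2 M b0 _ _ HM HG2 HB2 IHx IHy).
Qed.

Lemma picard_in_strip n u T : Rabs u <= T -> Rabs (picard_y n u) <= Rabs b0 + M * T.
Proof.
  intros Hu. destruct (picard_at_0 n) as [_ H0]. rewrite <- H0.
  apply Rabs_le_of_lipschitz; auto. apply field_bound_nonneg. apply lipschitz_picard.
Qed.

Definition picard_step n s :=
  Rabs (picard_x (S n) s - picard_x n s) + Rabs (picard_y (S n) s - picard_y n s).

Lemma picard_step_le T L1 L2 : 0 <= T -> 0 <= L1 -> 0 <= L2 ->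
  lipschitz_on_strip G1 (Rabs b0 + M * T) L1 -> lipschitz_on_strip G2 (Rabs b0 + M * T) L2 ->
  forall n s, Rabs s <= T ->
  picard_step n s <= 2 * M * (L1 + L2) ^ n * Rabs s ^ (S n) / INR (fact (S n)).
Proof.
  intros HT HL1 HL2 Hl1 Hl2. pose proof field_bound_nonneg as HM.
  induction n as [|n IH]; intros s Hs.
  - unfold picard_step. rewrite picard_x_S, picard_y_S. unfold picard_x, picard_y. simpl.
    rewrite !Rplus_minus_l.
    pose proof (Rabs_RInt_le_const (fun _ => G1 a0 b0) M 0 s (continuous_const _) (fun u _ => HB1 _ _)).
    pose proof (Rabs_RInt_le_const (fun _ => G2 a0 b0) M 0 s (continuous_const _) (fun u _ => HB2 _ _)).
    rewrite Rminus_0_r in *. simpl. lra.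
  - set (C := 2 * M * (L1 + L2) ^ n / INR (fact (S n))).
    assert (HC : 0 <= C).
    { unfold C, Rdiv. apply Rmult_le_pos; [apply Rmult_le_pos; [lra|apply pow_le; lra]|].
      apply Rlt_le, Rinv_0_lt_compat, lt_0_INR, lt_O_fact. }
    assert (IH' : forall u, Rabs u <= Rabs s -> picard_step n u <= C * Rabs u ^ (S n)).
    { intros u Hu. eapply Rle_trans; [apply IH; lra|]. unfold C. right. unfold Rdiv. ring. }
    destruct (lipschitz_picard n) as [Hxn Hyn]. destruct (lipschitz_picard (S n)) as [Hxn' Hyn'].
    destruct (continuous_field_comp _ _ Hxn Hyn) as [c1 c2].
    destruct (continuous_field_comp _ _ Hxn' Hyn') as [c1' c2'].
    unfold picard_step. rewrite (picard_x_S (S n)), (picard_y_S (S n)), (picard_x_S n), (picard_y_S n).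
    rewrite !Rminus_plus_l_l.
    rewrite !RInt_minus_cont by auto.
    assert (E1 : Rabs (RInt (fun u => G1 (picard_x (S n) u) (picard_y (S n) u)
                                - G1 (picard_x n u) (picard_y n u)) 0 s)
                 <= L1 * C * Rabs s ^ S (S n) / INR (S (S n))).
    { apply Rabs_RInt_le_monomial; [intro u; apply continuous_Rminus; auto|].
      intros u Hu. eapply Rle_trans; [apply Hl1; apply picard_in_strip; lra|].
      rewrite Rmult_assoc. apply Rmult_le_compat_l; auto. apply IH'; auto. }
    assert (E2 : Rabs (RInt (fun u => G2 (picard_x (S n) u) (picard_y (S n) u)
                                - G2 (picard_x n u) (picard_y n u)) 0 s)
                 <= L2 * C * Rabs s ^ S (S n) / INR (S (S n))).
    { apply Rabs_RInt_le_monomial; [intro u; apply continuous_Rminus; auto|].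
      intros u Hu. eapply Rle_trans; [apply Hl2; apply picard_in_strip; lra|].
      rewrite Rmult_assoc. apply Rmult_le_compat_l; auto. apply IH'; auto. }
    eapply Rle_trans; [apply Rplus_le_compat; [apply E1|apply E2]|].
    right. unfold C. rewrite (fact_simpl (S n)), mult_INR.
    assert (INR (S (S n)) <> 0) by (apply not_0_INR; lia).
    pose proof (INR_fact_neq_0 (S n)).
    simpl pow. field. split; auto.
Qed.

Lemma picard_steps_summable T : 0 <= T ->
  exists a, ex_series a /\ forall n s, Rabs s <= T -> picard_step n s <= a n.
Proof.
  intros HT. pose proof field_bound_nonneg as HM.
  assert (Hr : 0 <= Rabs b0 + M * T) by (pose proof (Rabs_pos b0); nra).
  destruct (strip_lipschitz_on G1 _ HG1 Hr) as [L1 [HL1 Hl1]].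
  destruct (strip_lipschitz_on G2 _ HG2 Hr) as [L2 [HL2 Hl2]].
  exists (fun n => 2 * M * T * (/ INR (fact n) * ((L1 + L2) * T) ^ n)).
  split; [apply ex_series_exp_bound|].
  intros n s Hs. eapply Rle_trans; [apply (picard_step_le T L1 L2); auto|].
  apply factorial_term_le; auto. lra.
Qed.

Definition picard_x_lim t := real (Lim_seq (fun n => picard_x n t)).
Definition picard_y_lim t := real (Lim_seq (fun n => picard_y n t)).

Lemma picard_uniform_cvg T : 0 <= T -> exists e, is_lim_seq e 0 /\
  forall s, Rabs s <= T ->
    is_lim_seq (fun n => picard_x n s) (picard_x_lim s) /\
    is_lim_seq (fun n => picard_y n s) (picard_y_lim s) /\
    forall n, Rabs (picard_x_lim s - picard_x n s) <= e n /\ Rabs (picard_y_lim s - picard_y n s) <= e n.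
Proof.
  intros HT. destruct (picard_steps_summable T HT) as [a [Ha Hb]].
  exists (tail a). split; [apply is_lim_tail, Ha|]. intros s Hs.
  destruct (cvg_of_summable_increments (fun n => picard_x n s) a Ha) as [l [Hl Hlb]].
  { intro k. pose proof (Hb k s Hs). pose proof (Rabs_pos (picard_y (S k) s - picard_y k s)).
    unfold picard_step in *. lra. }
  destruct (cvg_of_summable_increments (fun n => picard_y n s) a Ha) as [l' [Hl' Hlb']].
  { intro k. pose proof (Hb k s Hs). pose proof (Rabs_pos (picard_x (S k) s - picard_x k s)).
    unfold picard_step in *. lra. }
  unfold picard_x_lim, picard_y_lim.
  rewrite (is_lim_seq_unique _ _ Hl), (is_lim_seq_unique _ _ Hl'). simpl. auto.
Qed.

Lemma is_lim_picard s :
  is_lim_seq (fun n => picard_x n s) (picard_x_lim s) /\ is_lim_seq (fun n => picard_y n s) (picard_y_lim s).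
Proof.
  destruct (picard_uniform_cvg (Rabs s) (Rabs_pos s)) as [e [_ Hc]].
  destruct (Hc s (Rle_refl _)) as [A [B _]]. auto.
Qed.

Lemma picard_lim_at_0 : picard_x_lim 0 = a0 /\ picard_y_lim 0 = b0.
Proof.
  unfold picard_x_lim, picard_y_lim.
  rewrite (is_lim_seq_unique _ a0), (is_lim_seq_unique _ b0); [split; reflexivity| |];
    [apply is_lim_seq_ext with (fun _ => b0)|apply is_lim_seq_ext with (fun _ => a0)];
    try apply is_lim_seq_const; intro n; symmetry; apply picard_at_0.
Qed.

Lemma lipschitz_picard_lim : lipschitz picard_x_lim M /\ lipschitz picard_y_lim M.
Proof.
  split; intros s t.
  - apply (is_lim_seq_Rabs_le (fun n => picard_x n s - picard_x n t)); [|intro n; apply lipschitz_picard].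
    apply is_lim_seq_minus'; apply is_lim_picard.
  - apply (is_lim_seq_Rabs_le (fun n => picard_y n s - picard_y n t)); [|intro n; apply lipschitz_picard].
    apply is_lim_seq_minus'; apply is_lim_picard.
Qed.

Lemma picard_lim_fixed_point t :
  picard_x_lim t = a0 + RInt (fun s => G1 (picard_x_lim s) (picard_y_lim s)) 0 t /\
  picard_y_lim t = b0 + RInt (fun s => G2 (picard_x_lim s) (picard_y_lim s)) 0 t.
Proof.
  pose proof field_bound_nonneg as HM.
  destruct (picard_uniform_cvg (Rabs t) (Rabs_pos t)) as [e [He Hc]].
  assert (Hr : 0 <= Rabs b0 + M * Rabs t) by (pose proof (Rabs_pos b0); pose proof (Rabs_pos t); nra).
  destruct (strip_lipschitz_on G1 _ HG1 Hr) as [L1 [HL1 Hl1]].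
  destruct (strip_lipschitz_on G2 _ HG2 Hr) as [L2 [HL2 Hl2]].
  destruct lipschitz_picard_lim as [Lx Ly].
  destruct (continuous_field_comp _ _ Lx Ly) as [Cx Cy].
  assert (Hbound : forall n u, Rabs u <= Rabs t ->
    Rabs (picard_y n u) <= Rabs b0 + M * Rabs t /\ Rabs (picard_y_lim u) <= Rabs b0 + M * Rabs t /\
    Rabs (picard_x n u - picard_x_lim u) <= e n /\ Rabs (picard_y n u - picard_y_lim u) <= e n).
  { intros n u Hu. destruct (Hc u Hu) as [_ [_ Hn]]. destruct (Hn n) as [E1 E2].
    rewrite Rabs_minus_sym in E1, E2. split; [apply picard_in_strip; auto|split; auto].
    destruct picard_lim_at_0 as [_ H0]. rewrite <- H0. apply Rabs_le_of_lipschitz; auto. }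
  assert (Hlim : forall c, is_lim_seq (fun n => c * (2 * e n) * Rabs t) 0).
  { intro c. replace (Finite 0) with (Finite (c * (2 * 0) * Rabs t)) by (f_equal; ring).
    apply is_lim_seq_mult'; [|apply is_lim_seq_const]. apply is_lim_seq_mult'; [apply is_lim_seq_const|].
    apply is_lim_seq_mult'; [apply is_lim_seq_const|exact He]. }
  split.
  - apply (is_lim_seq_eq_of_Rabs_le (fun n => picard_x (S n) t) (fun n => L1 * (2 * e n) * Rabs t));
      [apply (is_lim_seq_incr_1 (fun n => picard_x n t)), is_lim_picard|apply Hlim|].
    intro n. rewrite picard_x_S, Rminus_plus_l_l. destruct (lipschitz_picard n) as [Hxn Hyn].
    apply (Rabs_RInt_comp_minus_le G1 (Rabs b0 + M * Rabs t) L1);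
      [auto|auto|apply (continuous_field_comp _ _ Hxn Hyn)|auto|intros u Hu; apply Hbound; auto].
  - apply (is_lim_seq_eq_of_Rabs_le (fun n => picard_y (S n) t) (fun n => L2 * (2 * e n) * Rabs t));
      [apply (is_lim_seq_incr_1 (fun n => picard_y n t)), is_lim_picard|apply Hlim|].
    intro n. rewrite picard_y_S, Rminus_plus_l_l. destruct (lipschitz_picard n) as [Hxn Hyn].
    apply (Rabs_RInt_comp_minus_le G2 (Rabs b0 + M * Rabs t) L2);
      [auto|auto|apply (continuous_field_comp _ _ Hxn Hyn)|auto|intros u Hu; apply Hbound; auto].
Qed.

End Iteration.

Lemma ode_solution_exists a0 b0 : exists x y : R -> R,
  x 0 = a0 /\ y 0 = b0 /\ lipschitz x M /\ lipschitz y M /\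
  (forall t, derivable_pt_lim x t (G1 (x t) (y t))) /\ (forall t, derivable_pt_lim y t (G2 (x t) (y t))).
Proof.
  destruct (lipschitz_picard_lim a0 b0) as [Lx Ly].
  destruct (continuous_field_comp _ _ Lx Ly) as [Cx Cy].
  destruct (picard_lim_at_0 a0 b0) as [X0 Y0].
  pose proof (picard_lim_fixed_point a0 b0) as Hfix.
  set (x := picard_x_lim a0 b0) in *. set (y := picard_y_lim a0 b0) in *.
  exists x, y. do 4 (split; auto). split; intro t.
  - apply (derivable_pt_lim_ext (fun t => a0 + RInt (fun s => G1 (x s) (y s)) 0 t));
      [intro s; symmetry; apply Hfix|].
    apply (derivable_pt_lim_RInt_0 (fun s => G1 (x s) (y s))); auto.
  - apply (derivable_pt_lim_ext (fun t => b0 + RInt (fun s => G2 (x s) (y s)) 0 t));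
      [intro s; symmetry; apply Hfix|].
    apply (derivable_pt_lim_RInt_0 (fun s => G2 (x s) (y s))); auto.
Qed.

Lemma ode_solution_unique x1 y1 x2 y2 :
  (forall t, derivable_pt_lim x1 t (G1 (x1 t) (y1 t))) ->
  (forall t, derivable_pt_lim y1 t (G2 (x1 t) (y1 t))) ->
  (forall t, derivable_pt_lim x2 t (G1 (x2 t) (y2 t))) ->
  (forall t, derivable_pt_lim y2 t (G2 (x2 t) (y2 t))) ->
  x1 0 = x2 0 -> y1 0 = y2 0 -> forall t, x1 t = x2 t /\ y1 t = y2 t.
Proof.
  intros Dx1 Dy1 Dx2 Dy2 E0x E0y t. pose proof field_bound_nonneg as HM.
  assert (Ly1 : lipschitz y1 M) by (apply (lipschitz_of_derive_bound _ _ M Dy1); auto).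
  assert (Ly2 : lipschitz y2 M) by (apply (lipschitz_of_derive_bound _ _ M Dy2); auto).
  set (r := Rabs (y1 0) + M * Rabs t).
  assert (Hr : 0 <= r) by (pose proof (Rabs_pos (y1 0)); pose proof (Rabs_pos t); unfold r; nra).
  destruct (strip_lipschitz_on G1 _ HG1 Hr) as [L1 [HL1 Hl1]].
  destruct (strip_lipschitz_on G2 _ HG2 Hr) as [L2 [HL2 Hl2]].
  set (Q := fun s => (x1 s - x2 s) * (x1 s - x2 s) + (y1 s - y2 s) * (y1 s - y2 s)).
  assert (HQ : Q t = 0).
  { apply (gronwall_zero Q (fun s => 2 * (x1 s - x2 s) * (G1 (x1 s) (y1 s) - G1 (x2 s) (y2 s))
                                  + 2 * (y1 s - y2 s) * (G2 (x1 s) (y1 s) - G2 (x2 s) (y2 s)))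
                         (4 * (L1 + L2))); [lra| | | |].
    - intro s. apply (derivable_pt_lim_plus (fun s => (x1 s - x2 s) * (x1 s - x2 s))
                                              (fun s => (y1 s - y2 s) * (y1 s - y2 s)));
        apply derivable_pt_lim_sq_minus; auto.
    - intro s. unfold Q. apply Rplus_le_le_0_compat; apply Rle_0_sqr.
    - unfold Q. rewrite E0x, E0y. ring.
    - intros s Hs.
      assert (b1 : Rabs (y1 s) <= r) by (apply Rabs_le_of_lipschitz; auto).
      assert (b2 : Rabs (y2 s) <= r) by (unfold r; rewrite E0y; apply Rabs_le_of_lipschitz; auto).
      apply Rabs_sq_dist_deriv_le; auto. }
  destruct (Rplus_sqr_eq_0 _ _ HQ). split; lra.
Qed.

End Picard.

Lemma sqr_le_D_beta d beta th W : 0 < beta -> W * W <= D_beta d beta th W.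
Proof.
  intros Hb. unfold D_beta.
  assert (0 <= d ^ 2 / beta * (sqrt beta * sin th - cos th) ^ 2)
    by (apply Rmult_le_pos; [apply Rdiv_le_0_compat; [apply pow2_ge_0|lra]|apply pow2_ge_0]).
  simpl. lra.
Qed.

(* [theta_beta] is exactly the zero of [sqrt beta * sin th - cos th] in the first quadrant. *)
Lemma D_beta_pos_iff_in_Omega d beta th W : 0 < d -> 1 <= beta -> 0 < th < PI / 2 ->
  (0 < D_beta d beta th W <-> in_Omega beta th W).
Proof.
  intros Hd Hb Hth.
  assert (Hsb : 0 < sqrt beta) by (apply sqrt_lt_R0; lra).
  assert (Hk : 0 < d ^ 2 / beta) by (apply Rdiv_lt_0_compat; [apply pow_lt|]; lra).
  assert (Hc : 0 < cos th) by (apply cos_gt_0; lra).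
  assert (Htb : th = theta_beta beta <-> sqrt beta * sin th - cos th = 0).
  { unfold theta_beta. split; intro H.
    - subst th. pose proof (tan_atan (/ sqrt beta)) as T. unfold tan in T.
      set (z := atan (/ sqrt beta)) in *.
      apply (Rmult_eq_compat_l (sqrt beta * cos z)) in T.
      replace (sqrt beta * cos z * (sin z / cos z)) with (sqrt beta * sin z) in T by (field; lra).
      replace (sqrt beta * cos z * / sqrt beta) with (cos z) in T by (field; lra). lra.
    - rewrite <- (atan_tan th) by (split; lra). f_equal. unfold tan. field_simplify_eq; lra. }
  unfold D_beta, in_Omega. split.
  - intros HD. do 2 (split; [lra|]). intros [E1 E2]. subst W.
    rewrite (proj1 Htb E1) in HD. simpl in HD. lra.
  - intros [_ [_ Hne]]. destruct (Req_dec W 0) as [HW|HW].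
    + subst W. assert (sqrt beta * sin th - cos th <> 0) by (intro E; apply Hne; split; [apply Htb|]; auto).
      assert (0 < (sqrt beta * sin th - cos th) ^ 2) by (apply pow2_gt_0; auto). simpl. nra.
    + assert (0 < W ^ 2) by (apply pow2_gt_0; auto).
      assert (0 <= (sqrt beta * sin th - cos th) ^ 2) by apply pow2_ge_0. nra.
Qed.

Lemma in_Omega_positive d beta th W : 0 < d -> 1 <= beta -> in_Omega beta th W ->
  0 < sin th /\ 0 < cos th /\ 0 < D_beta d beta th W.
Proof.
  intros Hd Hb HO. pose proof HO as [H1 [H2 _]].
  split; [apply sin_gt_0|split; [apply cos_gt_0|apply (D_beta_pos_iff_in_Omega d); auto]]; lra.
Qed.

Definition potential (d beta th : R) : R :=
  (beta * sqrt beta * ln ((1 + sin th) / cos th) + ln ((1 + cos th) / sin th)) / d.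

Definition interaction (alpha d beta th W : R) : R := alpha * sqrt beta / sqrt (D_beta d beta th W).

Definition hamiltonian (alpha d beta th W : R) : R := potential d beta th + interaction alpha d beta th W.

Lemma potential_derive d beta th : 0 < d -> 0 < sin th -> 0 < cos th ->
  is_derive (potential d beta) th ((beta * sqrt beta * sin th - cos th) / (d * sin th * cos th)).
Proof.
  intros Hd Hs Hc. unfold potential. auto_derive.
  - repeat split; try lra; apply Rdiv_lt_0_compat; lra.
  - pose proof (sin2_cos2 th) as E. unfold Rsqr in E.
    set (s := sin th) in *. set (c := cos th) in *. clearbody s c.
    transitivity ((beta * sqrt beta * ((c * c + s * s + s) / (c * (1 + s)))
                   + (- (s * s + c * c + c) / (s * (1 + c)))) / d); [field; repeat split; lra|].
    replace (c * c + s * s + s) with (1 + s) by lra. replace (s * s + c * c + c) with (1 + c) by lra.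
    field. repeat split; lra.
Qed.

(* [F1 = - d hamiltonian / dW] and [F2 = d hamiltonian / dtheta]: the system is Hamiltonian. *)
Lemma interaction_derive alpha d beta (th W : R -> R) t : 0 < d -> 1 <= beta ->
  0 < sin (th t) -> 0 < cos (th t) -> 0 < D_beta d beta (th t) (W t) ->
  is_derive th t (F1 alpha d beta (th t) (W t)) -> is_derive W t (F2 alpha d beta (th t) (W t)) ->
  is_derive (fun t => interaction alpha d beta (th t) (W t)) t
    (- ((beta * sqrt beta * sin (th t) - cos (th t)) / (d * sin (th t) * cos (th t)))
     * F1 alpha d beta (th t) (W t)).
Proof.
  intros Hd Hb Hs Hc HD Dth DW.
  assert (Eth : ex_derive th t) by (eexists; exact Dth).
  assert (EW : ex_derive W t) by (eexists; exact DW).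
  unfold interaction, D_beta in *. auto_derive.
  - assert (HD' : 0 < d * (d * 1) / beta * ((sqrt beta * sin (th t) + - cos (th t)) *
      ((sqrt beta * sin (th t) + - cos (th t)) * 1)) + W t * (W t * 1))
      by (eapply Rlt_le_trans; [exact HD|]; right; unfold Rdiv; ring).
    repeat split; auto. apply Rgt_not_eq, sqrt_lt_R0, HD'.
  - replace (Derive (fun x => th x) t) with (F1 alpha d beta (th t) (W t))
      by (symmetry; apply is_derive_unique; exact Dth).
    replace (Derive (fun x => W x) t) with (F2 alpha d beta (th t) (W t))
      by (symmetry; apply is_derive_unique; exact DW).
    unfold F1, F2, D32, D_beta.
    set (DD := d ^ 2 / beta * (sqrt beta * sin (th t) - cos (th t)) ^ 2 + W t ^ 2) in *.
    replace (d * (d * 1) / beta * ((sqrt beta * sin (th t) + - cos (th t)) *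
      ((sqrt beta * sin (th t) + - cos (th t)) * 1)) + W t * (W t * 1)) with DD
      by (unfold DD, Rdiv; ring).
    rewrite sqrt_sqrt by lra.
    assert (Hq : 0 < sqrt DD) by (apply sqrt_lt_R0; auto).
    assert (Hsb : 0 < sqrt beta) by (apply sqrt_lt_R0; lra).
    assert (Eb : beta = sqrt beta * sqrt beta) by (rewrite sqrt_sqrt; lra).
    set (q := sqrt DD) in *. set (sb := sqrt beta) in *.
    set (s := sin (th t)) in *. set (c := cos (th t)) in *. set (w := W t) in *.
    clearbody q DD sb s c w. rewrite Eb. field. repeat split; lra.
Qed.

Lemma hamiltonian_derive alpha d beta (th W : R -> R) t : 0 < d -> 1 <= beta ->
  0 < sin (th t) -> 0 < cos (th t) -> 0 < D_beta d beta (th t) (W t) ->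
  derivable_pt_lim th t (F1 alpha d beta (th t) (W t)) -> derivable_pt_lim W t (F2 alpha d beta (th t) (W t)) ->
  derivable_pt_lim (fun t => hamiltonian alpha d beta (th t) (W t)) t 0.
Proof.
  intros Hd Hb Hs Hc HD Dth DW. apply is_derive_Reals in Dth, DW. apply is_derive_Reals.
  pose proof (is_derive_comp (potential d beta) th t _ _ (potential_derive d beta (th t) Hd Hs Hc) Dth) as DP.
  pose proof (is_derive_plus _ _ _ _ _ DP (interaction_derive alpha d beta th W t Hd Hb Hs Hc HD Dth DW)) as DH.
  replace (0 : R) with (F1 alpha d beta (th t) (W t) *
      ((beta * sqrt beta * sin (th t) - cos (th t)) / (d * sin (th t) * cos (th t)))
    + - ((beta * sqrt beta * sin (th t) - cos (th t)) / (d * sin (th t) * cos (th t)))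
     * F1 alpha d beta (th t) (W t)) by ring.
  exact DH.
Qed.

Lemma derive_0_const_segment (h : R -> R) t :
  (forall s, Rmin 0 t <= s <= Rmax 0 t -> derivable_pt_lim h s 0) -> h t = h 0.
Proof.
  intros H. destruct (Rtotal_order 0 t) as [Hp|[Hz|Hn]].
  - destruct (MVT_cor2 h (fun _ => 0) 0 t Hp) as [c [Hc _]]; [|lra].
    intros c Hc. apply H. rewrite Rmin_left, Rmax_right; lra.
  - subst; auto.
  - destruct (MVT_cor2 h (fun _ => 0) t 0 Hn) as [c [Hc _]]; [|lra].
    intros c Hc. apply H. rewrite Rmin_right, Rmax_left; lra.
Qed.

Lemma hamiltonian_conserved alpha d beta (th W : R -> R) t : 0 < d -> 1 <= beta ->
  (forall s, Rmin 0 t <= s <= Rmax 0 t ->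
     0 < sin (th s) /\ 0 < cos (th s) /\ 0 < D_beta d beta (th s) (W s) /\
     derivable_pt_lim th s (F1 alpha d beta (th s) (W s)) /\
     derivable_pt_lim W s (F2 alpha d beta (th s) (W s))) ->
  hamiltonian alpha d beta (th t) (W t) = hamiltonian alpha d beta (th 0) (W 0).
Proof.
  intros Hd Hb H. apply (derive_0_const_segment (fun s => hamiltonian alpha d beta (th s) (W s))).
  intros s Hs. destruct (H s Hs) as [H1 [H2 [H3 [H4 H5]]]]. apply hamiltonian_derive; auto.
Qed.

Lemma ln_div_nonneg x y : 0 < y -> y <= 1 -> 0 <= x -> 0 <= ln ((1 + x) / y).
Proof.
  intros Hy Hy1 Hx. rewrite <- ln_1. apply ln_le; [lra|].
  apply (Rmult_le_reg_r y); auto. unfold Rdiv. rewrite Rmult_assoc, Rinv_l; lra.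
Qed.

Lemma inv_exp_le_of_ln_div_le x y K : 0 < y -> 0 <= x -> ln ((1 + x) / y) <= K -> / exp K <= y.
Proof.
  intros Hy Hx H.
  assert (H1 : ln (/ y) <= K).
  { eapply Rle_trans; [|exact H]. apply ln_le; [apply Rinv_0_lt_compat; auto|].
    unfold Rdiv. rewrite <- (Rmult_1_l (/ y)) at 1. apply Rmult_le_compat_r; [|lra].
    apply Rlt_le, Rinv_0_lt_compat; auto. }
  rewrite ln_Rinv in H1 by auto.
  apply Rnot_lt_le. intro Hlt. apply ln_increasing in Hlt; [|auto].
  rewrite ln_Rinv, ln_exp in Hlt by apply exp_pos. lra.
Qed.

Lemma hamiltonian_level_bounds alpha d beta th W E : 0 < alpha -> 0 < d -> 1 <= beta ->
  0 < sin th -> 0 < cos th -> 0 < D_beta d beta th W -> hamiltonian alpha d beta th W = E ->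
  0 < E /\ / exp (d * E) <= sin th /\ / exp (d * E / (beta * sqrt beta)) <= cos th /\
  (alpha * sqrt beta / E) ^ 2 <= D_beta d beta th W.
Proof.
  intros Ha Hd Hb Hs Hc HD HE. unfold hamiltonian, potential, interaction in HE.
  pose proof (SIN_bound th). pose proof (COS_bound th).
  assert (Hsb : 1 <= sqrt beta) by (rewrite <- sqrt_1; apply sqrt_le_1_alt; lra).
  assert (Hbsb : 1 <= beta * sqrt beta) by nra.
  assert (Hq : 0 < sqrt (D_beta d beta th W)) by (apply sqrt_lt_R0; auto).
  assert (HI : 0 < alpha * sqrt beta / sqrt (D_beta d beta th W)) by (apply Rdiv_lt_0_compat; nra).
  pose proof (ln_div_nonneg (sin th) (cos th) Hc ltac:(lra) ltac:(lra)) as L1.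
  pose proof (ln_div_nonneg (cos th) (sin th) Hs ltac:(lra) ltac:(lra)) as L2.
  set (P1 := ln ((1 + sin th) / cos th)) in *. set (P2 := ln ((1 + cos th) / sin th)) in *.
  assert (HP : beta * sqrt beta * P1 + P2 <= d * E).
  { replace (beta * sqrt beta * P1 + P2) with (d * ((beta * sqrt beta * P1 + P2) / d)) by (field; lra).
    apply Rmult_le_compat_l; lra. }
  assert (HP1 : 0 <= beta * sqrt beta * P1) by nra.
  assert (HG : 0 <= (beta * sqrt beta * P1 + P2) / d) by (apply Rdiv_le_0_compat; lra).
  assert (HEpos : 0 < E) by lra.
  split; [|split; [|split]]; auto.
  - apply (inv_exp_le_of_ln_div_le (cos th)); auto; [lra|]. fold P2. lra.
  - apply (inv_exp_le_of_ln_div_le (sin th)); auto; [lra|]. fold P1.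
    apply (Rmult_le_reg_l (beta * sqrt beta)); [lra|].
    replace (beta * sqrt beta * (d * E / (beta * sqrt beta))) with (d * E) by (field; lra). lra.
  - set (q := sqrt (D_beta d beta th W)) in *.
    assert (HqE : alpha * sqrt beta / E <= q).
    { apply (Rmult_le_reg_r (E / q)); [apply Rdiv_lt_0_compat; auto|].
      replace (alpha * sqrt beta / E * (E / q)) with (alpha * sqrt beta / q) by (field; lra).
      replace (q * (E / q)) with E by (field; lra). lra. }
    assert (0 <= alpha * sqrt beta / E) by (apply Rdiv_le_0_compat; [apply Rmult_le_pos|]; lra).
    rewrite <- (sqrt_sqrt (D_beta d beta th W)) by lra. fold q. simpl. rewrite Rmult_1_r.
    apply Rmult_le_compat; auto.
Qed.

Definition D_cut d beta eta th W := Rmax (D_beta d beta th W) eta.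

Definition F1_cut alpha d beta eta th W :=
  alpha * sqrt beta * W * / D_cut d beta eta th W * / sqrt (D_cut d beta eta th W).

Definition F2_cut alpha d beta sig kap eta th W :=
  (beta * sqrt beta * sin th - cos th) * (/ d * / Rmax (sin th) sig * / Rmax (cos th) kap)
  - alpha * d ^ 2 / sqrt beta * (sin th + sqrt beta * cos th) * (sqrt beta * sin th - cos th)
     * / D_cut d beta eta th W * / sqrt (D_cut d beta eta th W).

Definition in_region d beta sig kap eta th W :=
  sig <= sin th /\ kap <= cos th /\ eta <= D_beta d beta th W.

Lemma F_cut_agree alpha d beta sig kap eta th W : 0 < d -> 1 <= beta ->
  0 < sig -> 0 < kap -> 0 < eta -> in_region d beta sig kap eta th W ->
  F1_cut alpha d beta eta th W = F1 alpha d beta th W /\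
  F2_cut alpha d beta sig kap eta th W = F2 alpha d beta th W.
Proof.
  intros Hd Hb Hs Hk He [H1 [H2 H3]].
  assert (Hsb : 0 < sqrt beta) by (apply sqrt_lt_R0; lra).
  assert (Hq : 0 < sqrt (D_beta d beta th W)) by (apply sqrt_lt_R0; lra).
  unfold F1_cut, F2_cut, F1, F2, D32, D_cut.
  rewrite (Rmax_left (sin th)), (Rmax_left (cos th)), Rmax_left by lra.
  split; field; repeat split; lra.
Qed.

Lemma D_cut_ge d beta eta th W : eta <= D_cut d beta eta th W.
Proof. apply Rmax_r. Qed.

Lemma strip_lipschitz_D_cut d beta eta : strip_lipschitz (D_cut d beta eta).
Proof.
  apply (strip_lipschitz_max (D_beta d beta)).
  apply strip_lipschitz_ext with
    (fun a b => d ^ 2 / beta * ((sqrt beta * sin a - cos a) * (sqrt beta * sin a - cos a)) + b * b);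
    [intros; unfold D_beta; ring|].
  apply strip_lipschitz_plus;
    [apply strip_lipschitz_mult; [apply strip_lipschitz_const|apply strip_lipschitz_mult]
    |apply strip_lipschitz_mult; apply strip_lipschitz_snd];
    apply strip_lipschitz_minus; try apply strip_lipschitz_cos;
    apply strip_lipschitz_mult; try apply strip_lipschitz_const; apply strip_lipschitz_sin.
Qed.

Lemma strip_lipschitz_D_cut_factor d beta eta : 0 < eta ->
  strip_lipschitz (fun a b => / D_cut d beta eta a b * / sqrt (D_cut d beta eta a b)).
Proof.
  intros He. apply strip_lipschitz_mult.
  - apply (strip_lipschitz_inv _ eta He); [apply D_cut_ge|apply strip_lipschitz_D_cut].
  - apply (strip_lipschitz_inv _ (sqrt eta)); [apply sqrt_lt_R0; auto|intros; apply sqrt_le_1_alt, D_cut_ge|].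
    apply (strip_lipschitz_sqrt _ eta He); [apply D_cut_ge|apply strip_lipschitz_D_cut].
Qed.

Lemma strip_lipschitz_F1_cut alpha d beta eta : 0 < eta -> strip_lipschitz (F1_cut alpha d beta eta).
Proof.
  intros He. apply strip_lipschitz_ext with
    (fun a b => (alpha * sqrt beta * b) * (/ D_cut d beta eta a b * / sqrt (D_cut d beta eta a b)));
    [intros; unfold F1_cut; ring|].
  apply strip_lipschitz_mult; [|apply strip_lipschitz_D_cut_factor; auto].
  apply strip_lipschitz_mult; [apply strip_lipschitz_const|apply strip_lipschitz_snd].
Qed.

Lemma strip_lipschitz_F2_cut alpha d beta sig kap eta : 0 < sig -> 0 < kap -> 0 < eta ->
  strip_lipschitz (F2_cut alpha d beta sig kap eta).
Proof.
  intros Hs Hk He.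
  assert (Hlin : forall c1 c2, strip_lipschitz (fun a _ => c1 * sin a + c2 * cos a)).
  { intros. apply strip_lipschitz_plus; apply strip_lipschitz_mult;
      auto using strip_lipschitz_const, strip_lipschitz_sin, strip_lipschitz_cos. }
  apply strip_lipschitz_ext with
    (fun a b => (beta * sqrt beta * sin a + (-1) * cos a) * (/ d * / Rmax (sin a) sig * / Rmax (cos a) kap)
       - (alpha * d ^ 2 / sqrt beta) * (1 * sin a + sqrt beta * cos a) * (sqrt beta * sin a + (-1) * cos a)
         * (/ D_cut d beta eta a b * / sqrt (D_cut d beta eta a b)));
    [intros; unfold F2_cut; ring|].
  apply strip_lipschitz_minus; apply strip_lipschitz_mult.
  - apply Hlin.
  - apply strip_lipschitz_mult; [apply strip_lipschitz_mult; [apply strip_lipschitz_const|]|].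
    + apply (strip_lipschitz_inv _ sig Hs); [intros; apply Rmax_r|].
      apply (strip_lipschitz_max (fun a _ => sin a)), strip_lipschitz_sin.
    + apply (strip_lipschitz_inv _ kap Hk); [intros; apply Rmax_r|].
      apply (strip_lipschitz_max (fun a _ => cos a)), strip_lipschitz_cos.
  - apply strip_lipschitz_mult; [apply strip_lipschitz_mult; [apply strip_lipschitz_const|]|]; apply Hlin.
  - apply strip_lipschitz_D_cut_factor; auto.
Qed.

Lemma Rabs_mult_le a b A B : Rabs a <= A -> Rabs b <= B -> Rabs (a * b) <= A * B.
Proof. intros. rewrite Rabs_mult. apply Rmult_le_compat; auto; apply Rabs_pos. Qed.

Lemma Rabs_inv_le x c : 0 < c -> c <= x -> Rabs (/ x) <= / c.
Proof. intros. rewrite Rabs_inv, Rabs_right by lra. apply Rinv_le_contravar; lra. Qed.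

Lemma Rabs_inv_sqrt_D_cut_le d beta eta th W : 0 < eta ->
  Rabs (/ sqrt (D_cut d beta eta th W)) <= / sqrt eta.
Proof. intros. apply Rabs_inv_le; [apply sqrt_lt_R0; auto|apply sqrt_le_1_alt, D_cut_ge]. Qed.

Lemma F1_cut_bounded alpha d beta eta : 0 < alpha -> 1 <= beta -> 0 < eta ->
  forall a b, Rabs (F1_cut alpha d beta eta a b) <= alpha * sqrt beta / eta.
Proof.
  intros Ha Hb He a b. unfold F1_cut.
  assert (Hsb : 0 < sqrt beta) by (apply sqrt_lt_R0; lra).
  pose proof (D_cut_ge d beta eta a b).
  assert (HW : Rabs b <= sqrt (D_cut d beta eta a b)).
  { rewrite <- sqrt_Rsqr_abs. apply sqrt_le_1_alt. unfold D_cut, Rsqr.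
    eapply Rle_trans; [|apply Rmax_l]. apply sqr_le_D_beta; lra. }
  assert (Hq : 0 < sqrt (D_cut d beta eta a b)) by (apply sqrt_lt_R0; lra).
  set (q := sqrt (D_cut d beta eta a b)) in *. set (D := D_cut d beta eta a b) in *. clearbody q D.
  replace (alpha * sqrt beta * b * / D * / q) with ((alpha * sqrt beta) * (b / q) * / D) by (field; lra).
  replace (alpha * sqrt beta / eta) with ((alpha * sqrt beta) * 1 * / eta) by (field; lra).
  apply Rabs_mult_le; [apply Rabs_mult_le|apply Rabs_inv_le; lra].
  - rewrite Rabs_right; [lra|]. apply Rle_ge, Rmult_le_pos; lra.
  - unfold Rdiv. rewrite Rabs_mult, (Rabs_inv q), (Rabs_right q) by lra.
    apply (Rmult_le_reg_r q); auto. rewrite Rmult_assoc, Rinv_l by lra. lra.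
Qed.

Lemma F2_cut_bounded alpha d beta sig kap eta : 0 < sig -> 0 < kap -> 0 < eta ->
  exists M, forall a b, Rabs (F2_cut alpha d beta sig kap eta a b) <= M.
Proof.
  intros Hs Hk He.
  (* The bound is assembled in the existential witness by unification, one factor at a time. *)
  eexists. intros a b. unfold F2_cut, D_cut, Rminus, Rdiv.
  repeat match goal with
  | |- Rabs (_ * _) <= _ => apply Rabs_mult_le
  | |- Rabs (_ + _) <= _ => eapply Rle_trans; [apply Rabs_triang|apply Rplus_le_compat]
  | |- Rabs (- _) <= _ => rewrite Rabs_Ropp
  | |- Rabs (sin _) <= _ => apply Rabs_sin_le
  | |- Rabs (cos _) <= _ => apply Rabs_cos_le
  | |- Rabs (/ Rmax (sin _) _) <= _ => apply (Rabs_inv_le _ sig Hs), Rmax_r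
  | |- Rabs (/ Rmax (cos _) _) <= _ => apply (Rabs_inv_le _ kap Hk), Rmax_r
  | |- Rabs (/ Rmax (D_beta _ _ _ _) _) <= _ => apply (Rabs_inv_le _ eta He), Rmax_r
  | |- Rabs (/ sqrt _) <= _ => apply (Rabs_inv_sqrt_D_cut_le d beta eta a b He)
  | |- _ => apply Rle_refl
  end.
Qed.

Lemma continuity_pt_gt (f : R -> R) t c : continuity_pt f t -> c < f t ->
  exists e, 0 < e /\ forall s, Rabs (s - t) < e -> c < f s.
Proof.
  intros Hf H. destruct (Hf (f t - c)) as [e [He Hd]]; [lra|].
  exists e. split; auto. intros s Hs. destruct (Req_dec s t) as [->|Hne]; [lra|].
  assert (Rabs (f s - f t) < f t - c) by (apply (Hd s); split; [split; [exact I|auto]|exact Hs]).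
  apply Rabs_def2 in H0. lra.
Qed.

Lemma continuity_pt_Rmin (f g : R -> R) t : continuity_pt f t -> continuity_pt g t ->
  continuity_pt (fun s => Rmin (f s) (g s)) t.
Proof.
  intros Hf Hg eps Heps.
  destruct (Hf eps Heps) as [e1 [He1 H1]]. destruct (Hg eps Heps) as [e2 [He2 H2]].
  exists (Rmin e1 e2). split; [apply Rmin_pos; auto|]. intros s [Hs Hse].
  assert (Hs1 := H1 s (conj Hs (Rlt_le_trans _ _ _ Hse (Rmin_l _ _)))).
  assert (Hs2 := H2 s (conj Hs (Rlt_le_trans _ _ _ Hse (Rmin_r _ _)))).
  simpl in *. unfold R_dist in *. apply Rabs_def2 in Hs1, Hs2. apply Rabs_def1;
    unfold Rmin; repeat destruct Rle_dec; lra.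
Qed.

Lemma continuity_pt_of_ex_derive (f : R -> R) t : ex_derive f t -> continuity_pt f t.
Proof. intros H. apply continuity_pt_filterlim. exact (ex_derive_continuous f t H). Qed.

Lemma barrier_forward (g : R -> R) : (forall t, continuity_pt g t) -> 0 < g 0 ->
  (forall t, 0 <= t -> (forall s, 0 <= s <= t -> 0 <= g s) -> 0 < g t) ->
  forall t, 0 <= t -> 0 < g t.
Proof.
  intros Hc H0 Hstep t1 Ht1. apply NNPP. intro Hn.
  set (A := fun u => 0 <= u /\ forall s, 0 <= s <= u -> 0 < g s).
  assert (Hb : bound A).
  { exists t1. intros u [Hu Hs]. destruct (Rle_or_lt u t1); auto. exfalso. apply Hn, Hs. lra. }
  assert (HA0 : A 0) by (split; [lra|]; intros s Hs; replace s with 0 by lra; auto).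
  destruct (completeness A Hb (ex_intro _ 0 HA0)) as [m [Hub Hlub]].
  assert (Hm0 : 0 <= m) by (apply Hub, HA0).
  assert (Hlt : forall s, 0 <= s < m -> 0 < g s).
  { intros s Hs. apply NNPP. intro Hns.
    assert (m <= s); [|lra].
    apply Hlub. intros u [Hu Hu']. destruct (Rle_or_lt u s); auto. exfalso. apply Hns, Hu'. lra. }
  assert (Hm : 0 <= g m).
  { destruct (Req_dec m 0) as [->|Hm]; [lra|]. apply Rnot_lt_le. intro Hneg.
    destruct (continuity_pt_gt (fun s => - g s) m 0) as [e [He Hne]]; [apply continuity_pt_opp, Hc|lra|].
    pose proof (Hlt (Rmax 0 (m - e / 2)) ltac:(split; [apply Rmax_l|apply Rmax_lub_lt; lra])).
    assert (0 < - g (Rmax 0 (m - e / 2))); [|lra].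
    apply Hne. unfold Rmax. destruct Rle_dec; apply Rabs_def1; lra. }
  destruct (continuity_pt_gt g m 0 (Hc m)) as [e [He Hpos]].
  { apply Hstep; auto. intros s Hs. destruct (Req_dec s m) as [->|]; [auto|]. apply Rlt_le, Hlt; lra. }
  assert (Hnext : A (m + e / 2)); [|pose proof (Hub _ Hnext); lra].
  split; [lra|]. intros s Hs. destruct (Rlt_or_le s m); [apply Hlt; lra|]. apply Hpos, Rabs_def1; lra.
Qed.

Lemma barrier (g : R -> R) : (forall t, continuity_pt g t) -> 0 < g 0 ->
  (forall t, (forall s, Rmin 0 t <= s <= Rmax 0 t -> 0 <= g s) -> 0 < g t) ->
  forall t, 0 < g t.
Proof.
  intros Hc H0 Hstep t. destruct (Rle_or_lt 0 t).
  - apply barrier_forward; auto. intros u Hu Hs. apply Hstep. intros s Hs'.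
    rewrite Rmin_left, Rmax_right in Hs' by lra. auto.
  - replace t with (- - t) by ring. apply (barrier_forward (fun u => g (- u))); [| |intros u Hu Hs|lra].
    + intro u. apply (continuity_pt_comp Ropp g), Hc. apply continuity_pt_opp, continuity_pt_id.
    + rewrite Ropp_0. auto.
    + apply Hstep. intros s Hs'. rewrite Rmin_right, Rmax_left in Hs' by lra.
      replace s with (- - s) by ring. apply Hs. lra.
Qed.

Lemma angle_in_first_quadrant (x : R -> R) : (forall t, continuity_pt x t) -> 0 < x 0 < PI / 2 ->
  (forall t, 0 < sin (x t) /\ 0 < cos (x t)) -> forall t, 0 < x t < PI / 2.
Proof.
  intros Hc H0 Hsc t. pose proof PI_RGT_0.
  assert (Hcont : forall u, continuous x u) by (intro u; apply continuity_pt_filterlim, Hc).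
  apply NNPP. intro Hn.
  destruct (Rle_or_lt (x t) 0) as [Hle|Hgt].
  - destruct (IVT_gen_consistent x 0 t 0 Hcont) as [s [_ Hs]].
    { rewrite Rmin_right, Rmax_left by lra. lra. }
    pose proof (Hsc s) as [Hsin _]. rewrite Hs, sin_0 in Hsin. lra.
  - destruct (IVT_gen_consistent x 0 t (PI / 2) Hcont) as [s [_ Hs]].
    { rewrite Rmin_left, Rmax_right by lra. lra. }
    pose proof (Hsc s) as [_ Hcos]. rewrite Hs, cos_PI2 in Hcos. lra.
Qed.

Section Trapping.

Variables (alpha d beta sig kap eta th0 W0 : R).
Hypotheses (Halpha : 0 < alpha) (Hd : 0 < d) (Hbeta : 1 <= beta)
  (Hsig : 0 < sig) (Hkap : 0 < kap) (Heta : 0 < eta) (H0 : in_Omega beta th0 W0)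
  (Hlevel : forall th W, 0 < sin th -> 0 < cos th -> 0 < D_beta d beta th W ->
     hamiltonian alpha d beta th W = hamiltonian alpha d beta th0 W0 ->
     sig < sin th /\ kap < cos th /\ eta < D_beta d beta th W).

Lemma solution_in_region (th W : R -> R) : th 0 = th0 -> W 0 = W0 ->
  (forall t, in_Omega beta (th t) (W t)) ->
  (forall t, derivable_pt_lim th t (F1 alpha d beta (th t) (W t))) ->
  (forall t, derivable_pt_lim W t (F2 alpha d beta (th t) (W t))) ->
  forall t, in_region d beta sig kap eta (th t) (W t).
Proof.
  intros Hth0 HW0 HO Dth DW t.
  pose proof (fun t => in_Omega_positive d beta (th t) (W t) Hd Hbeta (HO t)) as Hpos.
  destruct (Hpos t) as [P1 [P2 P3]].
  destruct (Hlevel (th t) (W t) P1 P2 P3) as [R1 [R2 R3]]; [|repeat split; lra].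
  rewrite <- Hth0, <- HW0. apply hamiltonian_conserved; auto.
  intros s _. destruct (Hpos s) as [S1 [S2 S3]]. auto.
Qed.

Lemma cut_solution_in_region (x y : R -> R) : x 0 = th0 -> y 0 = W0 ->
  (forall t, derivable_pt_lim x t (F1_cut alpha d beta eta (x t) (y t))) ->
  (forall t, derivable_pt_lim y t (F2_cut alpha d beta sig kap eta (x t) (y t))) ->
  forall t, sig < sin (x t) /\ kap < cos (x t) /\ eta < D_beta d beta (x t) (y t).
Proof.
  intros Hx0 Hy0 Dx Dy.
  set (margin := fun s => Rmin (sin (x s) - sig) (Rmin (cos (x s) - kap) (D_beta d beta (x s) (y s) - eta))).
  assert (Hmargin : forall s, 0 <= margin s -> in_region d beta sig kap eta (x s) (y s)).
  { intros s Hs. unfold margin in Hs.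
    pose proof (Rmin_l (sin (x s) - sig) (Rmin (cos (x s) - kap) (D_beta d beta (x s) (y s) - eta))).
    pose proof (Rmin_r (sin (x s) - sig) (Rmin (cos (x s) - kap) (D_beta d beta (x s) (y s) - eta))).
    pose proof (Rmin_l (cos (x s) - kap) (D_beta d beta (x s) (y s) - eta)).
    pose proof (Rmin_r (cos (x s) - kap) (D_beta d beta (x s) (y s) - eta)).
    unfold in_region. lra. }
  assert (Hstrict : forall t, (forall s, Rmin 0 t <= s <= Rmax 0 t -> 0 <= margin s) ->
    sig < sin (x t) /\ kap < cos (x t) /\ eta < D_beta d beta (x t) (y t)).
  { intros t Ht.
    assert (Hseg : forall s, Rmin 0 t <= s <= Rmax 0 t ->
      0 < sin (x s) /\ 0 < cos (x s) /\ 0 < D_beta d beta (x s) (y s) /\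
      derivable_pt_lim x s (F1 alpha d beta (x s) (y s)) /\ derivable_pt_lim y s (F2 alpha d beta (x s) (y s))).
    { intros s Hs. pose proof (Hmargin s (Ht s Hs)) as Hr.
      destruct (F_cut_agree alpha d beta sig kap eta (x s) (y s)) as [E1 E2]; auto.
      destruct Hr as [R1 [R2 R3]]. rewrite <- E1, <- E2. repeat split; auto; lra. }
    destruct (Hseg t (conj (Rmin_r 0 t) (Rmax_r 0 t))) as [S1 [S2 [S3 _]]].
    apply Hlevel; auto. rewrite <- Hx0, <- Hy0. apply hamiltonian_conserved; auto. }
  assert (Hex : forall s, ex_derive x s /\ ex_derive y s).
  { intro s. split; [exists (F1_cut alpha d beta eta (x s) (y s))
                    |exists (F2_cut alpha d beta sig kap eta (x s) (y s))]; apply is_derive_Reals; auto. }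
  assert (Hcont : forall t, continuity_pt margin t).
  { intro t. destruct (Hex t) as [Ex Ey]. unfold margin.
    apply continuity_pt_Rmin; [|apply continuity_pt_Rmin]; apply continuity_pt_of_ex_derive;
      unfold D_beta; auto_derive; auto. }
  intro t. apply Hstrict. intros s _. apply Rlt_le. revert s. apply barrier; auto.
  - unfold margin. rewrite Hx0, Hy0. destruct (in_Omega_positive d beta th0 W0) as [P1 [P2 P3]]; auto.
    destruct (Hlevel th0 W0 P1 P2 P3 eq_refl) as [Q1 [Q2 Q3]].
    repeat apply Rmin_glb_lt; lra.
  - intros u Hu. destruct (Hstrict u Hu) as [Q1 [Q2 Q3]]. unfold margin. repeat apply Rmin_glb_lt; lra.
Qed.

Lemma cut_field_bounded : exists M,
  (forall a b, Rabs (F1_cut alpha d beta eta a b) <= M) /\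
  (forall a b, Rabs (F2_cut alpha d beta sig kap eta a b) <= M).
Proof.
  destruct (F2_cut_bounded alpha d beta sig kap eta Hsig Hkap Heta) as [M2 HM2].
  exists (Rmax (alpha * sqrt beta / eta) M2). split; intros a b.
  - eapply Rle_trans; [apply F1_cut_bounded; auto|apply Rmax_l].
  - eapply Rle_trans; [apply HM2|apply Rmax_r].
Qed.

Lemma global_solution_exists : exists th W, is_global_solution alpha d beta th0 W0 th W.
Proof.
  destruct cut_field_bounded as [M [HB1 HB2]].
  pose proof (strip_lipschitz_F1_cut alpha d beta eta Heta) as HL1.
  pose proof (strip_lipschitz_F2_cut alpha d beta sig kap eta Hsig Hkap Heta) as HL2.
  destruct (ode_solution_exists _ _ M HL1 HL2 HB1 HB2 th0 W0) as [x [y [Hx0 [Hy0 [Lx [Ly [Dx Dy]]]]]]].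
  destruct (continuous_field_comp _ _ M HL1 HL2 HB1 x y Lx Ly) as [C1 C2].
  pose proof (cut_solution_in_region x y Hx0 Hy0 Dx Dy) as Hreg.
  assert (Hagree : forall t, F1_cut alpha d beta eta (x t) (y t) = F1 alpha d beta (x t) (y t) /\
                             F2_cut alpha d beta sig kap eta (x t) (y t) = F2 alpha d beta (x t) (y t)).
  { intro t. destruct (Hreg t) as [R1 [R2 R3]]. apply F_cut_agree; auto. repeat split; lra. }
  assert (Hquad : forall t, 0 < x t < PI / 2).
  { apply angle_in_first_quadrant.
    - intro t. apply (derivable_continuous_pt x t), (exist _ _ (Dx t)).
    - rewrite Hx0. destruct H0 as [Ha [Hb _]]. lra.
    - intro t. destruct (Hreg t) as [R1 [R2 _]]. lra. }
  exists x, y. split; [|split; [|split; [|split; [|split; [|split]]]]]; auto.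
  - exists (fun t => F1_cut alpha d beta eta (x t) (y t)).
    split; auto. intro t. apply continuity_pt_filterlim, C1.
  - exists (fun t => F2_cut alpha d beta sig kap eta (x t) (y t)).
    split; auto. intro t. apply continuity_pt_filterlim, C2.
  - intro t. apply (D_beta_pos_iff_in_Omega d); auto. destruct (Hreg t) as [_ [_ R3]]. lra.
  - intro t. rewrite <- (proj1 (Hagree t)). auto.
  - intro t. rewrite <- (proj2 (Hagree t)). auto.
Qed.

Lemma global_solution_unique th1 W1 th2 W2 :
  is_global_solution alpha d beta th0 W0 th1 W1 -> is_global_solution alpha d beta th0 W0 th2 W2 ->
  forall t, th1 t = th2 t /\ W1 t = W2 t.
Proof.
  destruct cut_field_bounded as [M [HB1 HB2]].
  pose proof (strip_lipschitz_F1_cut alpha d beta eta Heta) as HL1.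
  pose proof (strip_lipschitz_F2_cut alpha d beta sig kap eta Hsig Hkap Heta) as HL2.
  assert (Hcut : forall th W : R -> R, is_global_solution alpha d beta th0 W0 th W ->
    (forall t, derivable_pt_lim th t (F1_cut alpha d beta eta (th t) (W t))) /\
    (forall t, derivable_pt_lim W t (F2_cut alpha d beta sig kap eta (th t) (W t)))).
  { intros th W [_ [_ [HO [Hth0 [HW0 [Dth DW]]]]]].
    pose proof (solution_in_region th W Hth0 HW0 HO Dth DW) as Hreg.
    split; intro t; destruct (F_cut_agree alpha d beta sig kap eta (th t) (W t)) as [E1 E2]; auto;
      [rewrite E1|rewrite E2]; auto. }
  intros S1 S2. destruct (Hcut _ _ S1) as [D1 E1]. destruct (Hcut _ _ S2) as [D2 E2].
  destruct S1 as [_ [_ [_ [X1 [Y1 _]]]]]. destruct S2 as [_ [_ [_ [X2 [Y2 _]]]]].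
  apply (ode_solution_unique _ _ M HL1 HL2 HB1 HB2); auto; congruence.
Qed.

End Trapping.

Lemma level_set_margins alpha d beta th0 W0 : 0 < alpha -> 0 < d -> 1 <= beta -> in_Omega beta th0 W0 ->
  exists sig kap eta, 0 < sig /\ 0 < kap /\ 0 < eta /\
    forall th W, 0 < sin th -> 0 < cos th -> 0 < D_beta d beta th W ->
      hamiltonian alpha d beta th W = hamiltonian alpha d beta th0 W0 ->
      sig < sin th /\ kap < cos th /\ eta < D_beta d beta th W.
Proof.
  intros Ha Hd Hb H0. destruct (in_Omega_positive d beta th0 W0 Hd Hb H0) as [Hs0 [Hc0 Hpos0]].
  set (E := hamiltonian alpha d beta th0 W0).
  destruct (hamiltonian_level_bounds alpha d beta th0 W0 E Ha Hd Hb Hs0 Hc0 Hpos0 eq_refl) as [HE _].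
  assert (Hsb : 0 < sqrt beta) by (apply sqrt_lt_R0; lra).
  pose proof (Rinv_0_lt_compat _ (exp_pos (d * E))) as P1.
  pose proof (Rinv_0_lt_compat _ (exp_pos (d * E / (beta * sqrt beta)))) as P2.
  assert (P3 : 0 < (alpha * sqrt beta / E) ^ 2).
  { apply pow2_gt_0, Rgt_not_eq, Rdiv_lt_0_compat; [apply Rmult_lt_0_compat|]; lra. }
  exists (/ exp (d * E) / 2), (/ exp (d * E / (beta * sqrt beta)) / 2), ((alpha * sqrt beta / E) ^ 2 / 2).
  split; [lra|split; [lra|split; [lra|]]].
  intros th W Hs Hc HD HH.
  destruct (hamiltonian_level_bounds alpha d beta th W E Ha Hd Hb Hs Hc HD HH) as [_ [B1 [B2 B3]]]. lra.
Qed.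

Theorem theorem1 (alpha d beta : R) (Halpha : 0 < alpha) (Hd : 0 < d) (Hbeta : 1 <= beta)
  (th0 W0 : R) (H0 : in_Omega beta th0 W0) :
  exists th W : R -> R,
    is_global_solution alpha d beta th0 W0 th W /\
    forall th' W' : R -> R, is_global_solution alpha d beta th0 W0 th' W' ->
      forall t, th' t = th t /\ W' t = W t.
Proof.
  destruct (level_set_margins alpha d beta th0 W0 Halpha Hd Hbeta H0)
    as [sig [kap [eta [Hsig [Hkap [Heta Hlevel]]]]]].
  destruct (global_solution_exists alpha d beta sig kap eta th0 W0) as [th [W Hsol]]; auto.
  exists th, W. split; auto.
  intros th' W' Hsol'. apply (global_solution_unique alpha d beta sig kap eta th0 W0); auto.
Qed.
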